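(* Let $\alpha\in(0,1/2)$ and suppose $V_0(x)+V_1(x)>0$ for all $x\in\mathcal X$. Then the allocation policy minimizing $\mathrm{tr}(\Sigma_{\mathrm{eff}}(\pi))$ over $\pi\in\Pi_\alpha=\{\pi:\alpha\le\pi(x)\le1-\alpha\ \text{for all }x\}$ is $$\pi^\star(x)=\mathrm{clip}_\alpha\!\left(\frac{\sqrt{V_1(x)}}{\sqrt{V_1(x)}+\sqrt{V_0(x)}}\right),\qquad V_a(x)=\sum_{t=0}^{t_{\max}}v_{t,a}(x)=\mathrm{tr}(\Sigma_a(x)),$$ where $v_{t,a}(x)$ is the $t$-th diagonal entry of $\Sigma_a(x)$.
   Context: Discrete horizon $\mathcal T=\{0,\dots,t_{\max}\}$; unit $(X,A,T,C)$ with covariates $X$, treatment $A\in\{0,1\}$, event time $T$, censoring time $C$; observed $\mathcal O=(X,A,\widetilde T,\Delta)$, $\widetilde T=\min\{T,C\}$, $\Delta=\mathbf 1(T\le C)$. $S_t(x,a)=\mathbb P(T>t\mid X=x,A=a)$, $\lambda^S_t(x,a)=\mathbb P(\widetilde T=t,\Delta=1\mid\widetilde T\ge t,X=x,A=a)$, $\lambda^G_t(x,a)=\mathbb P(\widetilde T=t,\Delta=0\mid\widetilde T\ge t,X=x,A=a)$, $G_{t-1}(x,a)=\prod_{i=0}^{t-1}(1-\lambda^G_i(x,a)/(1-\lambda^S_i(x,a)))$, $S_{-1}=G_{-1}\equiv 1$. $\eta_t$ denotes the collection of these hazards up to time $t$, and $\xi(\mathcal O,\eta_t)=\sum_{i=0}^t\frac{\mathbf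 1(\widetilde T=i,\Delta=1)-\mathbf 1(\widetilde T\ge i)\lambda^S_i(X,A)}{S_i(X,A)G_{i-1}(X,A)}$. $\tau_t=\mathbb E[S_t(X,1)-S_t(X,0)]$, $\boldsymbol\tau=(\tau_t)_{t=0}^{t_{\max}}$, $\boldsymbol S(X,a)=(S_t(X,a))_{t=0}^{t_{\max}}$, $\boldsymbol\xi=(\xi(\mathcal O,\eta_t))_{t=0}^{t_{\max}}$. For a policy $\pi(x)=\mathbb P(A=1\mid X=x)$, $\Sigma_a(X)=\mathrm{Var}(\boldsymbol S(X,a)\odot\boldsymbol\xi\mid X,A=a)$ ($\odot$ entrywise product) and $\Sigma_{\mathrm{eff}}(\pi)=\mathbb E[\Sigma_1(X)/\pi(X)+\Sigma_0(X)/(1-\pi(X))]+\mathbb E[b(X)b(X)^\top]$ with $b(X)=\boldsymbol S(X,1)-\boldsymbol S(X,0)-\boldsymbol\tau$. $\mathrm{clip}_\alpha(u)=\min\{1-\alpha,\max\{\alpha,u\}\}$. *)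

From HB Require Import structures.
From mathcomp Require Import all_boot all_order all_algebra.
From mathcomp Require Import all_classical all_reals all_analysis.

Set Implicit Arguments.
Unset Strict Implicit.
Unset Printing Implicit Defensive.

Import Order.TTheory GRing.Theory Num.Theory.
Import numFieldNormedType.Exports.

Local Open Scope classical_set_scope.
Local Open Scope ring_scope.

(* Discrete horizon T = {0,...,tmax}, indexed by 'I_(tmax.+1).
   Event time T and censoring time C are recorded coarsened at tmax+1
   (value tmax+1 = "beyond the horizon"); every quantity of the paper
   (hazards on {0..tmax}, S_t for t <= tmax, xi) only depends on this
   coarsening.  An outcome is a pair (T, C). *)
Definition outcome (tmax : nat) : finType := ('I_tmax.+2 * 'I_tmax.+2)%type.

Section Model.
Variables (R : realType) (tmax : nat).
(* q : conditional law of (T, C) given X = x, A = a *)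
Variable q : {ffun outcome tmax -> R}.

Definition Ttil (o : outcome tmax) : nat := minn o.1 o.2.
Definition Delta (o : outcome tmax) : bool := (o.1 <= o.2)%N.

Definition Eq (f : outcome tmax -> R) : R := \sum_o q o * f o.
Definition Pr (E : outcome tmax -> bool) : R := Eq (fun o => (E o)%:R).

(* lambda^S_t, lambda^G_t (convention x/0 = 0) *)
Definition lamS (t : nat) : R :=
  Pr (fun o => (Ttil o == t) && Delta o) / Pr (fun o => (t <= Ttil o)%N).
Definition lamG (t : nat) : R :=
  Pr (fun o => (Ttil o == t) && ~~ Delta o) / Pr (fun o => (t <= Ttil o)%N).

Definition Surv (t : nat) : R := Pr (fun o => (t < o.1)%N).

(* Gm1 t = G_{t-1} = prod_{i=0}^{t-1} (1 - lamG_i / (1 - lamS_i)); Gm1 0 = 1 *)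
Definition Gm1 (t : nat) : R :=
  \prod_(i < t) (1 - lamG i / (1 - lamS i)).

Definition xi (o : outcome tmax) (t : nat) : R :=
  \sum_(i < t.+1)
    (((Ttil o == i) && Delta o)%:R - (i <= Ttil o)%:R * lamS i)
      / (Surv i * Gm1 i).

Definition Yv (o : outcome tmax) (t : 'I_tmax.+1) : R := Surv t * xi o t.

Definition SigmaM : 'M[R]_tmax.+1 :=
  \matrix_(s, t) (Eq (fun o => Yv o s * Yv o t) - Eq (fun o => Yv o s) * Eq (fun o => Yv o t)).
End Model.

Section Policy.
Variables (R : realType) (d : measure_display) (X : measurableType d).
Variable (PX : probability X R) (tmax : nat).
Variable p : X -> bool -> {ffun outcome tmax -> R}.

Definition Sigma (x : X) (a : bool) : 'M[R]_tmax.+1 := SigmaM (p x a).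

Definition V (x : X) (a : bool) : R := \tr (Sigma x a).

Definition S (x : X) (a : bool) (t : 'I_tmax.+1) : R := Surv (p x a) t.

Definition tau (t : 'I_tmax.+1) : R :=
  Rintegral PX setT (fun x => S x true t - S x false t).

Definition b (x : X) (t : 'I_tmax.+1) : R := S x true t - S x false t - tau t.

Local Open Scope ereal_scope.
Definition Sigma_eff (pi : X -> R) (s t : 'I_tmax.+1) : \bar R :=
  (\int[PX]_x ((Sigma x true s t / pi x + Sigma x false s t / (1 - pi x))%R%:E))
  + (\int[PX]_x ((b x s * b x t)%R%:E)).

Definition tr_Sigma_eff (pi : X -> R) : \bar R := \sum_(t < tmax.+1) Sigma_eff pi t t.
End Policy.

Definition clip (R : realType) (alpha u : R) : R :=
  Num.min (1 - alpha) (Num.max alpha u).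

Definition Pi_alpha (R : realType) (d : measure_display) (X : measurableType d)
  (alpha : R) (pi : X -> R) : Prop :=
  measurable_fun setT pi /\ forall x, alpha <= pi x <= 1 - alpha.

Definition pistar (R : realType) (d : measure_display) (X : measurableType d)
  (tmax : nat) (p : X -> bool -> {ffun outcome tmax -> R}) (alpha : R) (x : X) : R :=
  clip alpha (Num.sqrt (V p x true) / (Num.sqrt (V p x true) + Num.sqrt (V p x false))).

From HB Require Import structures.
From mathcomp Require Import all_boot all_order all_algebra.
From mathcomp Require Import all_classical all_reals all_analysis.
From mathcomp Require Import measurable_realfun ring lra.
Import Order.TTheory GRing.Theory Num.Theory.
Local Open Scope classical_set_scope.
Local Open Scope ring_scope.

(* E[b b^T] does not depend on the policy, and
   tr E[Sigma_1/pi + Sigma_0/(1-pi)] = E[V_1/pi + V_0/(1-pi)], so it suffices to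
   minimise p |-> V_1/p + V_0/(1-p) pointwise over [alpha, 1-alpha].  With
   V_1 = a^2 and V_0 = c^2, the difference of its values at p and q has the sign
   of (p - q) (cp cq - a(1-p) a(1-q)); hence it decreases on (0, u] and increases
   on [u, 1) for u = a / (a + c), and its minimiser over [alpha, 1-alpha] is u
   clipped to that interval. *)

Section measurable_inv.
Variable R : realType.

Lemma measurable_inv : measurable_fun [set: R] (@GRing.inv R).
Proof.
have m0 : measurable [set (0 : R)] by exact: measurable_set1.
rewrite -(setUv [set (0 : R)]).
apply/(measurable_funU _ m0 (measurableC m0)); split.
  exact: measurable_fun_set1.
apply: open_continuous_measurable_fun.
  by rewrite openC; apply: compact_closed; [exact: Rhausdorff|exact: compact_set1].
by move=> x; rewrite inE /= => /eqP x0; exact: inv_continuous.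
Qed.

Lemma measurable_sqrt : measurable_fun [set: R] (@Num.sqrt R).
Proof. by apply: continuous_measurable_fun; exact: sqrt_continuous. Qed.

End measurable_inv.

Lemma measurable_funV d (X : measurableType d) (R : realType) (f : X -> R) :
  measurable_fun setT f -> measurable_fun setT (fun x => (f x)^-1).
Proof. exact: measurableT_comp (measurable_inv R). Qed.

Section measurable_model.
Context d (X : measurableType d) (R : realType) (tmax : nat).
Variable q : X -> {ffun outcome tmax -> R}.
Hypothesis q_meas : forall o, measurable_fun setT (fun x => q x o).

Lemma measurable_Eq (f : X -> outcome tmax -> R) :
  (forall o, measurable_fun setT (f^~ o)) -> measurable_fun setT (fun x => Eq (q x) (f x)).
Proof. by move=> mf; apply: measurable_sum => o; exact: measurable_funM. Qed.

Lemma measurable_Pr E : measurable_fun setT (fun x => Pr (q x) E).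
Proof. by apply: measurable_Eq => o; exact: measurable_cst. Qed.

Lemma measurable_lamS t : measurable_fun setT (fun x => lamS (q x) t).
Proof. by apply: measurable_funM; [|apply: measurable_funV]; exact: measurable_Pr. Qed.

Lemma measurable_lamG t : measurable_fun setT (fun x => lamG (q x) t).
Proof. by apply: measurable_funM; [|apply: measurable_funV]; exact: measurable_Pr. Qed.

Lemma measurable_Gm1 t : measurable_fun setT (fun x => Gm1 (q x) t).
Proof.
apply: measurable_prod => i _; apply: measurable_funB; first exact: measurable_cst.
apply: measurable_funM; first exact: measurable_lamG.
apply: measurable_funV.
by apply: measurable_funB; [exact: measurable_cst|exact: measurable_lamS].
Qed.

Lemma measurable_xi o t : measurable_fun setT (fun x => xi (q x) o t).
Proof.
apply: measurable_sum => i; apply: measurable_funM; last apply: measurable_funV.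
  apply: measurable_funB; first exact: measurable_cst.
  by apply: measurable_funM; [exact: measurable_cst|exact: measurable_lamS].
by apply: measurable_funM; [exact: measurable_Pr|exact: measurable_Gm1].
Qed.

Lemma measurable_Yv o t : measurable_fun setT (fun x => Yv (q x) o t).
Proof. by apply: measurable_funM; [exact: measurable_Pr|exact: measurable_xi]. Qed.

Lemma measurable_SigmaM s t : measurable_fun setT (fun x => SigmaM (q x) s t).
Proof.
under eq_fun do rewrite mxE.
apply: measurable_funB.
  by apply: measurable_Eq => o; apply: measurable_funM; exact: measurable_Yv.
by apply: measurable_funM; apply: measurable_Eq => o; exact: measurable_Yv.
Qed.

End measurable_model.

Lemma measurable_V d (X : measurableType d) (R : realType) (tmax : nat)
    (p : X -> bool -> {ffun outcome tmax -> R}) a :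
  (forall o, measurable_fun setT (fun x => p x a o)) -> measurable_fun setT (fun x => V p x a).
Proof. by move=> p_meas; apply: measurable_sum => t; exact: measurable_SigmaM. Qed.

Section variance.
Context (R : realType) (tmax : nat) (q : {ffun outcome tmax -> R}).
Hypotheses (q_ge0 : forall o, 0 <= q o) (q_sum1 : \sum_o q o = 1).

Lemma Eq_var_ge0 (Y : outcome tmax -> R) : 0 <= Eq q (fun o => Y o * Y o) - Eq q Y * Eq q Y.
Proof.
set m := Eq q Y.
have -> : Eq q (fun o => Y o * Y o) - m * m = \sum_o q o * (Y o - m) ^+ 2.
  rewrite (eq_bigr (fun o => q o * (Y o * Y o) - ((2 * m) * (q o * Y o) - (m * m) * q o)));
    last by move=> o _; ring.
  by rewrite !sumrB -!mulr_sumr q_sum1 -/(Eq q Y) -/m /Eq; ring.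
by apply: sumr_ge0 => o _; apply: mulr_ge0 => //; exact: sqr_ge0.
Qed.

Lemma SigmaM_diag_ge0 t : 0 <= SigmaM q t t.
Proof. by rewrite mxE; exact: Eq_var_ge0. Qed.

End variance.

Section allocation_risk.
Context {R : realFieldType}.
Implicit Types (a c p q : R).

Definition alloc_risk (v1 v0 p : R) := v1 / p + v0 / (1 - p).

Lemma alloc_risk_ge0 (v1 v0 : R) p : 0 <= v1 -> 0 <= v0 -> 0 < p < 1 ->
  0 <= alloc_risk v1 v0 p.
Proof. by move=> v1_ge0 v0_ge0 /andP[p0 p1]; rewrite addr_ge0 ?divr_ge0 //; lra. Qed.

Lemma alloc_riskC (v1 v0 : R) p : alloc_risk v1 v0 p = alloc_risk v0 v1 (1 - p).
Proof. by rewrite /alloc_risk opprB addrC subrKC. Qed.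

Lemma alloc_risk_le (v1 v0 : R) p q : 0 < q < 1 -> 0 < p < 1 ->
  0 <= (p - q) * (v0 * p * q - v1 * (1 - p) * (1 - q)) ->
  alloc_risk v1 v0 q <= alloc_risk v1 v0 p.
Proof.
move=> /andP[q0 q1] /andP[p0 p1] sign_ge0; rewrite -subr_ge0.
have -> : alloc_risk v1 v0 p - alloc_risk v1 v0 q =
    (p - q) * (v0 * p * q - v1 * (1 - p) * (1 - q)) / (p * q * (1 - p) * (1 - q)).
  by rewrite /alloc_risk; field; rewrite !subr_eq0; apply/and4P; split; apply/eqP; lra.
by apply: divr_ge0 => //; rewrite !mulr_ge0 //; lra.
Qed.

Lemma alloc_risk_sqr_nondecreasing a c p q : 0 <= a -> 0 <= c -> 0 < a + c ->
  0 < q -> a / (a + c) <= q -> q <= p -> p < 1 ->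
  alloc_risk (a ^+ 2) (c ^+ 2) q <= alloc_risk (a ^+ 2) (c ^+ 2) p.
Proof.
move=> a0 c0 ac0 q0; rewrite ler_pdivrMr // => uq qp p1.
apply: alloc_risk_le; [lra|lra|].
apply: mulr_ge0; first lra.
rewrite (_ : _ - _ = c * p * (c * q) - a * (1 - p) * (a * (1 - q))); last by ring.
have up : a <= p * (a + c) by apply: (le_trans uq); rewrite ler_pM2r.
rewrite subr_ge0; apply: ler_pM; rewrite ?mulr_ge0 //; lra.
Qed.

Lemma alloc_risk_sqr_nonincreasing a c p q : 0 <= a -> 0 <= c -> 0 < a + c ->
  q < 1 -> q <= a / (a + c) -> p <= q -> 0 < p ->
  alloc_risk (a ^+ 2) (c ^+ 2) q <= alloc_risk (a ^+ 2) (c ^+ 2) p.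
Proof.
move=> a0 c0 ac0 q1 qu pq p0; rewrite alloc_riskC [leRHS]alloc_riskC.
have ca0 : 0 < c + a by rewrite addrC.
apply: alloc_risk_sqr_nondecreasing => //; [lra| |lra|lra].
by move: qu; rewrite !ler_pdivrMr // ler_pdivlMr //; lra.
Qed.

End allocation_risk.

Lemma measurable_alloc_risk d (X : measurableType d) (R : realType) (v1 v0 pi : X -> R) :
  measurable_fun setT v1 -> measurable_fun setT v0 -> measurable_fun setT pi ->
  measurable_fun setT (fun x => alloc_risk (v1 x) (v0 x) (pi x)).
Proof.
move=> m1 m0 mpi; apply: measurable_funD; apply: measurable_funM => //; apply: measurable_funV => //.
by apply: measurable_funB => //; exact: measurable_cst.
Qed.

Section clip.
Context {R : realType}.
Implicit Types (alpha a c p u : R).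

Lemma clip_bounds alpha u : alpha <= 1 - alpha -> alpha <= clip alpha u <= 1 - alpha.
Proof. by move=> alpha_le; rewrite /clip ge_min lexx le_min le_max lexx alpha_le. Qed.

Lemma alloc_risk_clip_le alpha a c p : 0 < alpha ->
  0 <= a -> 0 <= c -> 0 < a + c -> alpha <= p <= 1 - alpha ->
  alloc_risk (a ^+ 2) (c ^+ 2) (clip alpha (a / (a + c))) <= alloc_risk (a ^+ 2) (c ^+ 2) p.
Proof.
move=> alpha0 a0 c0 ac0 /andP[alpha_p p_alpha]; set u := a / (a + c).
have [u_le|u_gt] := leP u alpha.
  rewrite /clip (max_idPl u_le) (min_idPr _); last lra.
  by apply: alloc_risk_sqr_nondecreasing; rewrite // -/u; lra.
have [u_ge|u_lt] := leP (1 - alpha) u.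
  rewrite /clip (max_idPr (ltW u_gt)) (min_idPl u_ge).
  by apply: alloc_risk_sqr_nonincreasing; rewrite // -/u; lra.
rewrite /clip (max_idPr (ltW u_gt)) (min_idPr (ltW u_lt)).
have [u_p|p_u] := leP u p.
  by apply: alloc_risk_sqr_nondecreasing; rewrite // -/u; lra.
by apply: alloc_risk_sqr_nonincreasing; rewrite // -/u; lra.
Qed.

Lemma alloc_risk_clip_sqrt_le alpha (v1 v0 p : R) : 0 < alpha ->
  0 <= v1 -> 0 <= v0 -> 0 < v0 + v1 -> alpha <= p <= 1 - alpha ->
  alloc_risk v1 v0 (clip alpha (Num.sqrt v1 / (Num.sqrt v1 + Num.sqrt v0)))
    <= alloc_risk v1 v0 p.
Proof.
move=> alpha0 v1_ge0 v0_ge0 v_gt0 p_in.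
have sqrt_gt0 : 0 < Num.sqrt v1 + Num.sqrt v0.
  have s1 := sqrtr_ge0 v1; have s0 := sqrtr_ge0 v0.
  have [v1_gt0|v1_le0] := ltrP 0 v1.
    by move: v1_gt0; rewrite -sqrtr_gt0; lra.
  have : 0 < v0 by lra.
  by rewrite -sqrtr_gt0; lra.
have := alloc_risk_clip_le _ _ _ _ alpha0 (sqrtr_ge0 v1) (sqrtr_ge0 v0) sqrt_gt0 p_in.
by rewrite !sqr_sqrtr.
Qed.

End clip.

Section trace_decomposition.
Context (R : realType) d (X : measurableType d) (PX : probability X R) (tmax : nat).
Variable p : X -> bool -> {ffun outcome tmax -> R}.
Hypotheses (p_ge0 : forall x a o, 0 <= p x a o) (p_sum1 : forall x a, \sum_o p x a o = 1)
  (p_meas : forall a o, measurable_fun setT (fun x => p x a o)).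

Lemma V_ge0 x a : 0 <= V p x a.
Proof. by apply: sumr_ge0 => t _; exact: SigmaM_diag_ge0. Qed.

Lemma measurable_pistar alpha : measurable_fun setT (pistar p alpha).
Proof.
have msqrtV a : measurable_fun setT (fun x => Num.sqrt (V p x a)).
  by apply: measurableT_comp (measurable_sqrt R) _; exact: measurable_V.
apply: measurable_minr; first exact: measurable_cst.
apply: measurable_maxr; first exact: measurable_cst.
by apply: measurable_funM => //; apply: measurable_funV; exact: measurable_funD.
Qed.

Lemma tr_Sigma_effE (pi : X -> R) : measurable_fun setT pi -> (forall x, 0 < pi x < 1) ->
  tr_Sigma_eff PX p pi =
    (\int[PX]_x (alloc_risk (V p x true) (V p x false) (pi x))%:E
     + \sum_(t < tmax.+1) \int[PX]_x (b PX p x t * b PX p x t)%:E)%E.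
Proof.
move=> pi_meas pi01; rewrite /tr_Sigma_eff /Sigma_eff big_split /=; congr (_ + _)%E.
rewrite -ge0_integral_sum //.
- apply: eq_integral => x _; rewrite sumEFin /alloc_risk /V /mxtrace.
  by rewrite big_split /= -!mulr_suml.
- move=> t; apply/measurable_EFinP.
  by apply: measurable_alloc_risk => //; exact: measurable_SigmaM.
- by move=> t x _; rewrite lee_fin alloc_risk_ge0 ?SigmaM_diag_ge0.
Qed.

Lemma le_tr_Sigma_eff (pi1 pi2 : X -> R) :
  measurable_fun setT pi1 -> (forall x, 0 < pi1 x < 1) ->
  measurable_fun setT pi2 -> (forall x, 0 < pi2 x < 1) ->
  (forall x, alloc_risk (V p x true) (V p x false) (pi1 x)
             <= alloc_risk (V p x true) (V p x false) (pi2 x)) ->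
  (tr_Sigma_eff PX p pi1 <= tr_Sigma_eff PX p pi2)%E.
Proof.
move=> m1 in1 m2 in2 le12; rewrite !tr_Sigma_effE //; apply: leeD => //.
have mV a : measurable_fun setT (fun x => V p x a) by exact: measurable_V.
apply: ge0_le_integral => //.
- by move=> x _; rewrite lee_fin alloc_risk_ge0 ?V_ge0.
- by apply/measurable_EFinP; exact: measurable_alloc_risk.
- by apply/measurable_EFinP; exact: measurable_alloc_risk.
- by move=> x _; rewrite lee_fin.
Qed.

End trace_decomposition.

Theorem proposition1 (R : realType) (d : measure_display) (X : measurableType d)
  (PX : probability X R) (tmax : nat)
  (p : X -> bool -> {ffun outcome tmax -> R})
  (p_ge0 : forall x a o, 0 <= p x a o)
  (p_sum1 : forall x a, \sum_o p x a o = 1)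
  (p_meas : forall a o, measurable_fun setT (fun x => p x a o))
  (alpha : R) (halpha : 0 < alpha < 1 / 2)
  (hV : forall x, 0 < V p x false + V p x true) :
  Pi_alpha alpha (pistar p alpha) /\
  forall pi : X -> R, Pi_alpha alpha pi ->
    (tr_Sigma_eff PX p (pistar p alpha) <= tr_Sigma_eff PX p pi)%E.
Proof.
have /andP[alpha_gt0 alpha_lt] := halpha.
have in01 (pi : X -> R) : (forall x, alpha <= pi x <= 1 - alpha) -> forall x, 0 < pi x < 1.
  by move=> pi_in x; have /andP[] := pi_in x; lra.
have [pistar_meas pistar_in] : Pi_alpha alpha (pistar p alpha).
  split; first exact: measurable_pistar.
  by move=> x; apply: clip_bounds; lra.
split=> // pi [pi_meas pi_in].
apply: le_tr_Sigma_eff => //; [exact: in01 | exact: in01 |].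
by move=> x; apply: alloc_risk_clip_sqrt_le; rewrite ?V_ge0.
Qed.
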